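(* Let $p\ge2$ be a fixed integer and let $\lambda,\mu$ be integral partitions all of whose entries are powers $p^i$ ($i\ge0$) of $p$. Then $\lambda\hookrightarrow\mu$ if and only if $\lambda\preccurlyeq_S\mu$.
   Context: An integral partition is a finite nonincreasing sequence of positive integers. $\lambda=[\lambda_1,\ldots,\lambda_m]$ embeds into $\mu=[\mu_1,\ldots,\mu_n]$, written $\lambda\hookrightarrow\mu$, if there is a map $\varphi:\{1,\ldots,m\}\to\{1,\ldots,n\}$ with $\sum_{i\in\varphi^{-1}(j)}\lambda_i\le\mu_j$ for all $j$. $\lambda\preccurlyeq_S\mu$ ($\mu$ supermajorizes $\lambda$) means: for every $x\in\mathbb N$, $\sum_{\lambda_i\ge x}\lambda_i\le\sum_{\mu_j\ge x}\mu_j$. *)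

From mathcomp Require Import all_boot.
Set Implicit Arguments. Unset Strict Implicit. Unset Printing Implicit Defensive.

Definition is_partition (l : seq nat) : bool :=
  sorted geq l && all (fun x => 0 < x) l.

Definition embeds (lam mu : seq nat) : Prop :=
  exists phi : 'I_(size lam) -> 'I_(size mu),
    forall j : 'I_(size mu),
      \sum_(i < size lam | phi i == j) nth 0 lam i <= nth 0 mu j.

Definition supermajorized (lam mu : seq nat) : Prop :=
  forall x : nat,
    \sum_(a <- lam | x <= a) a <= \sum_(b <- mu | x <= b) b.

Definition all_powers_of (p : nat) (l : seq nat) : Prop :=
  forall a, a \in l -> exists i : nat, a = p ^ i.

(* Necessity holds for all partitions: each part lambda_i >= x is placed in a
   part mu_j >= x, so the parts >= x of lambda fit into those >= x of mu.
   For sufficiency place the parts of lambda greedily, largest first, into any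
   part of mu that still has room.  When every part is a power of p, any
   remaining capacity m - a is a multiple of every later (smaller) part b, so
   either it is 0 or it is at least b; this is exactly what makes the
   supermajorization condition survive each greedy step. *)
From mathcomp Require Import all_boot.
From mathcomp Require Import zify.

Set Implicit Arguments.
Unset Strict Implicit.
Unset Printing Implicit Defensive.

Lemma embeds_supermajorized lam mu : embeds lam mu -> supermajorized lam mu.
Proof.
case=> phi Hphi x.
rewrite [X in X <= _](big_nth 0) [X in _ <= X](big_nth 0) !big_mkord.
rewrite (partition_big phi (fun j : 'I_(size mu) => x <= nth 0 mu j)) /=.
- apply: leq_sum => j _; apply: leq_trans (Hphi j).
  rewrite [X in X <= _]big_mkcond [X in _ <= X]big_mkcond /=.
  by apply: leq_sum => i _; case: (x <= _); case: (phi i == j).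
- move=> i Hi; apply: leq_trans Hi _; apply: leq_trans (Hphi (phi i)).
  by rewrite (bigD1 i) //= leq_addr.
Qed.

(* [embeds] with the map on plain indices, which is easier to extend part by
   part than a map between ordinal types. *)
Definition nat_embeds (lam mu : seq nat) : Prop :=
  exists f : nat -> nat,
    (forall i, i < size lam -> f i < size mu) /\
    forall j, j < size mu ->
      \sum_(i < size lam | f i == j) nth 0 lam i <= nth 0 mu j.

Lemma nat_embeds_embeds lam mu : nat_embeds lam mu -> embeds lam mu.
Proof.
case=> f [Hf Hsum].
exists (fun i : 'I_(size lam) => Ordinal (Hf i (ltn_ord i))) => j.
by apply: leq_trans (Hsum j (ltn_ord j)); under eq_bigl do rewrite -val_eqE.
Qed.

Lemma nat_embeds_cons a l mu j :
  j < size mu -> a <= nth 0 mu j ->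
  nat_embeds l (set_nth 0 mu j (nth 0 mu j - a)) -> nat_embeds (a :: l) mu.
Proof.
move=> Hj Ha [f [Hf Hsum]].
have Hsize : size (set_nth 0 mu j (nth 0 mu j - a)) = size mu.
  by rewrite size_set_nth; apply/maxn_idPr.
exists (fun i => if i is i'.+1 then f i' else j); split.
  by case=> [|i] //= Hi; rewrite -Hsize; apply: Hf.
move=> k Hk; rewrite big_mkcond big_ord_recl /=.
have -> : \sum_(i < size l) (if f (lift ord0 i).-1 == k then
     nth 0 l (lift ord0 i).-1 else 0) = \sum_(i < size l | f i == k) nth 0 l i.
  by rewrite [RHS]big_mkcond; apply: eq_bigr => i _; rewrite lift0.
have := Hsum k; rewrite Hsize => /(_ Hk); rewrite nth_set_nth /=.
by case: (eqVneq k j) => [->|_]; [rewrite ?eqxx; lia | rewrite add0n].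
Qed.

Lemma sum_geq_eq0 (x : nat) (l : seq nat) :
  (forall b, b \in l -> b < x) -> \sum_(b <- l | x <= b) b = 0.
Proof.
move=> Hlt; apply: big1_seq => b /andP [Hxb Hb].
by have := Hlt b Hb; rewrite ltnNge Hxb.
Qed.

Lemma supermajorized_set_nth a l mu j :
  j < size mu -> a <= nth 0 mu j ->
  (forall b, b \in l -> b <= a) ->
  (forall b, b \in l -> b %| nth 0 mu j - a) ->
  supermajorized (a :: l) mu ->
  supermajorized l (set_nth 0 mu j (nth 0 mu j - a)).
Proof.
move=> Hj Ham Hle Hdvd Hsup x.
set m := nth 0 mu j in Ham Hdvd *.
have := Hsup x; rewrite set_nthE Hj big_cons.
rewrite -[in X in X -> _](cat_take_drop j mu) (drop_nth 0 Hj).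
rewrite !big_cat !big_cons /= -/m.
case: (leqP x a) => [Hxa|Hax]; last first.
  by rewrite sum_geq_eq0 // => b /Hle; lia.
have -> : x <= m by apply: leq_trans Ham.
case: (leqP x (m - a)) => [|Hlt]; first lia.
case: (posnP (m - a)) => [|Hpos]; first lia.
by rewrite sum_geq_eq0 // => b /Hdvd /(dvdn_leq Hpos); lia.
Qed.

Lemma greedy_nat_embeds (l mu : seq nat) :
  sorted geq l -> all (fun a => 0 < a) l ->
  (forall b m, b \in l -> m \in mu -> m < b \/ b %| m) ->
  (forall a b, a \in l -> b \in l -> b <= a -> b %| a) ->
  supermajorized l mu -> nat_embeds l mu.
Proof.
elim: l mu => [|a l IH] mu Hsorted Hpos Hfit Hchain Hsup.
  by exists (fun _ => 0); split => // j _; rewrite big_ord0.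
have Hle : forall b, b \in l -> b <= a.
  apply/allP; apply: order_path_min Hsorted => y x z Hxy Hyz.
  exact: leq_trans Hyz Hxy.
have Hroom : has (fun m => a <= m) mu.
  apply/negPn/negP => /hasPn Hnone.
  have := Hsup a; rewrite big_cons leqnn (@sum_geq_eq0 a mu).
    by case/andP: Hpos; lia.
  by move=> m /Hnone; rewrite -ltnNge.
set j := find (fun m => a <= m) mu.
have Hj : j < size mu by rewrite -has_find.
have Ham : a <= nth 0 mu j := nth_find 0 Hroom.
have Hmmu : nth 0 mu j \in mu := mem_nth 0 Hj.
set m := nth 0 mu j in Ham Hmmu *.
have Hdvd : forall b, b \in l -> b %| m - a.
  move=> b Hb; have Hba := Hle b Hb.
  apply: dvdn_sub; last by apply: Hchain; rewrite ?inE ?Hb ?eqxx ?orbT.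
  by case: (Hfit b m _ Hmmu) => //; [rewrite inE Hb orbT | lia].
apply: (nat_embeds_cons Hj Ham); apply: IH.
- exact: path_sorted Hsorted.
- by case/andP: Hpos.
- move=> b x Hb; rewrite set_nthE Hj mem_cat inE.
  case/orP => [/mem_take|/orP [/eqP ->|/mem_drop]];
    try by apply: Hfit; rewrite inE Hb orbT.
  by case: (ltnP (m - a) b) => Hlt; [left | right; apply: Hdvd].
- by move=> x y Hx Hy; apply: Hchain; rewrite inE ?Hx ?Hy orbT.
- exact: supermajorized_set_nth.
Qed.

Lemma powers_lt_or_dvd p l mu :
  2 <= p -> all_powers_of p l -> all_powers_of p mu ->
  forall b m, b \in l -> m \in mu -> m < b \/ b %| m.
Proof.
move=> Hp Hl Hmu b m Hb Hm.
case: (Hl b Hb) => i ->; case: (Hmu m Hm) => k ->.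
case: (ltnP (p ^ k) (p ^ i)) => Hik; [by left | right].
by apply: dvdn_exp2l; rewrite -(leq_exp2l _ _ Hp).
Qed.

Theorem theorem3p2 (p : nat) (lam mu : seq nat) :
  2 <= p ->
  is_partition lam -> is_partition mu ->
  all_powers_of p lam -> all_powers_of p mu ->
  (embeds lam mu <-> supermajorized lam mu).
Proof.
move=> Hp /andP [Hsorted Hpos] _ Hlam Hmu.
split=> [|Hsup]; first exact: embeds_supermajorized.
apply/nat_embeds_embeds/greedy_nat_embeds => //.
- exact: powers_lt_or_dvd Hlam Hmu.
- move=> a b Ha Hb Hba.
  by case: (powers_lt_or_dvd Hp Hlam Hlam Hb Ha) => //; rewrite ltnNge Hba.
Qed.
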